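(* For any integer $m\ge1$ and any $d\ge2$, there is a pool $S_u\subseteq\mathbb{R}_+^d$ of size $m$ whose auditing complexity with respect to $\mathcal{H}_\Box^-$ is $m$.
   Context: For $\mathbf a\in\mathbb{R}_+^d$, $h_{\mathbf a}(x)=2\mathbb{I}[\exists i\in[d],\ x[i]\ge a[i]]-1$ and $h^-_{\mathbf a}=-h_{\mathbf a}$; $\mathcal{H}_\Box^-=\{h^-_{\mathbf a}:\mathbf a\in\mathbb{R}_+^d\}$ (negatives outside the rectangle). The auditing complexity of a finite unlabeled pool $S_u$ with respect to a class $\mathcal{H}$ is the minimum, over algorithms that sequentially query labels of points of $S_u$ and that for every labeling of $S_u$ consistent with some $h\in\mathcal{H}$ output (with probability 1) a hypothesis with zero error on the labeled pool, of the worst case (over such labelings) number of queried points whose label is $-1$. *)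

From HB Require Import structures.
From mathcomp Require Import all_boot all_order all_algebra.
From mathcomp Require Import reals.
Set Implicit Arguments. Unset Strict Implicit. Unset Printing Implicit Defensive.
Import Order.TTheory GRing.Theory Num.Theory.
Local Open Scope ring_scope.

(* Labels: [true] stands for +1, [false] for -1. *)

(* h^-_a(v) = - h_a(v), where h_a(v) = +1 iff exists i, v[i] >= a[i].
   Hence h^-_a(v) = +1 iff for all i, v[i] < a[i]. *)
Definition hminus (R : realType) (d : nat) (a v : 'rV[R]_d) : bool :=
  [forall i : 'I_d, v 0 i < a 0 i].

Definition consistent (R : realType) (m d : nat) (x : 'I_m -> 'rV[R]_d)
  (L : 'I_m -> bool) : Prop :=
  exists a : 'rV[R]_d, (forall i, 0 <= a 0 i) /\ forall j, L j = hminus a (x j).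

(* A (deterministic, adaptive) auditing algorithm on a pool of m points:
   a finite decision tree. [AQuery j tpos tneg] queries the label of point j
   and continues with [tpos] if it is +1, [tneg] if it is -1.
   [ALeaf f] stops and outputs the hypothesis f (its values on the pool). *)
Inductive atree (m : nat) : Type :=
| ALeaf : ('I_m -> bool) -> atree m
| AQuery : 'I_m -> atree m -> atree m -> atree m.

Fixpoint aoutput (m : nat) (t : atree m) (L : 'I_m -> bool) : 'I_m -> bool :=
  match t with
  | ALeaf f => f
  | AQuery j tp tn => if L j then aoutput tp L else aoutput tn L
  end.

Fixpoint aqueried (m : nat) (t : atree m) (L : 'I_m -> bool) : seq 'I_m :=
  match t with
  | ALeaf _ => [::]
  | AQuery j tp tn => j :: (if L j then aqueried tp L else aqueried tn L)
  end.

Definition acost (m : nat) (t : atree m) (L : 'I_m -> bool) : nat :=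
  #|[set j | (j \in aqueried t L) && ~~ L j]|.

Definition acorrect (R : realType) (m d : nat) (x : 'I_m -> 'rV[R]_d)
  (t : atree m) : Prop :=
  forall L, consistent x L -> forall j, aoutput t L j = L j.

Definition audits_within (R : realType) (m d : nat) (x : 'I_m -> 'rV[R]_d)
  (t : atree m) (n : nat) : Prop :=
  forall L, consistent x L -> (acost t L <= n)%N.

Definition auditing_complexity_is (R : realType) (m d : nat)
  (x : 'I_m -> 'rV[R]_d) (n : nat) : Prop :=
  (exists t, acorrect x t /\ audits_within x t n) /\
  (forall t k, acorrect x t -> audits_within x t k -> (n <= k)%N).

(* Put the points on an antidiagonal: x_j = (j+1, m-j, 0, ..., 0).  Then the
   all-negative labeling is consistent, and so is every labeling that is
   positive at a single point x_j (take the box with corner x_j + 1: every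
   other point exceeds it in one of the first two coordinates).  A correct
   auditor facing the all-negative labeling must therefore query every point,
   since an unqueried point could still be the positive one; so m negative
   queries are necessary, and querying everything shows they suffice. *)
From HB Require Import structures.
From mathcomp Require Import all_boot all_order all_algebra.
From mathcomp Require Import reals zify.
Import Order.TTheory GRing.Theory Num.Theory.
Local Open Scope ring_scope.
Set Implicit Arguments. Unset Strict Implicit.

Section AuditingTrees.

Variable m : nat.

Fixpoint query_seq (s : seq 'I_m) (f : 'I_m -> bool) : atree m :=
  match s with
  | [::] => ALeaf f
  | j :: s' => AQuery j (query_seq s' (fun k => if k == j then true else f k))
                        (query_seq s' (fun k => if k == j then false else f k))
  end.

Lemma aoutput_query_seq (s : seq 'I_m) f L k :
  aoutput (query_seq s f) L k = if k \in s then L k else f k.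
Proof.
elim: s f => [|j s IH] f //=.
case Lj: (L j); rewrite IH in_cons; case: (k =P j) => [->|_] /=; rewrite ?Lj //.
all: by case: (j \in s).
Qed.

Definition query_all : atree m := query_seq (enum 'I_m) (fun _ => true).

Lemma aoutput_query_all L : aoutput query_all L =1 L.
Proof. by move=> k; rewrite aoutput_query_seq mem_enum. Qed.

Lemma acost_le_size (t : atree m) L : (acost t L <= m)%N.
Proof. by rewrite /acost (leq_trans (max_card _)) ?card_ord. Qed.

Lemma aoutput_eq_on_queried (t : atree m) L L' :
  {in aqueried t L, L =1 L'} -> aoutput t L = aoutput t L'.
Proof.
elim: t => [f|j tp IHp tn IHn] //= LL'.
have <- : L j = L' j by apply: LL'; rewrite in_cons eqxx.
by case Lj: (L j); [apply: IHp | apply: IHn] => k qk; apply: LL';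
   rewrite in_cons Lj qk orbT.
Qed.

Lemma acost_all_queried (t : atree m) :
  (forall j, j \in aqueried t (fun _ => false)) -> acost t (fun _ => false) = m.
Proof.
move=> allq; rewrite /acost -[RHS]card_ord -cardsT; apply: eq_card => j.
by rewrite !inE allq.
Qed.

End AuditingTrees.

Section FullAuditingComplexity.

Variables (R : realType) (m d : nat) (x : 'I_m -> 'rV[R]_d).

Hypothesis all_negative_consistent : consistent x (fun _ => false).
Hypothesis singleton_consistent : forall j, consistent x (fun k => k == j).

Lemma acorrect_queries_all (t : atree m) :
  acorrect x t -> forall j, j \in aqueried t (fun _ => false).
Proof.
move=> tx j; apply/negPn/negP => unqueried.
have same_output : aoutput t (fun _ => false) = aoutput t (fun k => k == j).
  apply: aoutput_eq_on_queried => k qk; apply/esym/negbTE/eqP => kj.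
  by rewrite -kj qk in unqueried.
have := tx _ all_negative_consistent j.
by rewrite same_output tx // eqxx.
Qed.

Lemma auditing_complexity_full : auditing_complexity_is x m.
Proof.
split.
  exists (query_all m); split; first by move=> L _; apply: aoutput_query_all.
  by move=> L _; apply: acost_le_size.
move=> t k tx tk; have := tk _ all_negative_consistent.
by rewrite acost_all_queried //; apply: acorrect_queries_all.
Qed.

End FullAuditingComplexity.

Section AntidiagonalPool.

Variables (R : realType) (m d : nat).
Hypothesis d_ge2 : (2 <= d)%N.

Let i0 : 'I_d := Ordinal (ltnW d_ge2).
Let i1 : 'I_d := Ordinal d_ge2.

Definition antidiag (j : 'I_m) : 'rV[R]_d :=
  \row_i (if val i == 0%N then (j.+1)%:R else if val i == 1%N then (m - j)%:R
          else 0).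

Lemma antidiag0 j : antidiag j 0 i0 = (j.+1)%:R.
Proof. by rewrite mxE. Qed.

Lemma antidiag_ge0 j i : 0 <= antidiag j 0 i.
Proof. by rewrite mxE; do 2?case: ifP => _. Qed.

Lemma antidiag_inj : injective antidiag.
Proof.
move=> j k /(congr1 (fun v : 'rV[R]_d => v 0 i0)).
by rewrite !antidiag0 => /eqP; rewrite eqr_nat eqSS => /eqP /val_inj.
Qed.

Lemma antidiag_all_negative : consistent antidiag (fun _ => false).
Proof.
exists 0; split=> [i|j]; first by rewrite mxE.
apply/esym/negbTE/forallP => /(_ i0).
by rewrite antidiag0 mxE ltNge ler0n.
Qed.

Lemma antidiag_singleton j : consistent antidiag (fun k => k == j).
Proof.
exists (\row_i (antidiag j 0 i + 1)); split=> [i|k].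
  by rewrite mxE addr_ge0 ?antidiag_ge0.
rewrite /hminus; case: eqP => [->|kj].
  by apply/esym/forallP => i; rewrite [X in _ < X]mxE ltrDl ltr01.
apply/esym/negbTE/forallP => below.
have := below i0; have := below i1; rewrite !mxE /= !natr1 !ltr_nat => h1 h0.
by apply: kj; apply: ord_inj; have := ltn_ord k; have := ltn_ord j; lia.
Qed.

End AntidiagonalPool.

Theorem theorem4 (R : realType) (m d : nat) :
  (1 <= m)%N -> (2 <= d)%N ->
  exists x : 'I_m -> 'rV[R]_d,
    injective x /\ (forall j i, 0 <= x j 0 i) /\ auditing_complexity_is x m.
Proof.
move=> _ d_ge2; exists (@antidiag R m d); split; first exact: antidiag_inj.
split; first exact: antidiag_ge0.
apply: auditing_complexity_full; [exact: antidiag_all_negative | exact: antidiag_singleton].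
Qed.
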